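(* Let $\sigma>0$ and $V,\gamma,\varepsilon>0$ satisfy $\sqrt{\frac{1+\sigma}{\sigma}}<\frac{V+\gamma\varepsilon}{\sqrt\sigma}<\zeta_\sigma$. Let $n_s:=\frac{V+\gamma\varepsilon}{\sqrt\sigma}$ and \[ g(n):=\frac{(V+\gamma\varepsilon)^2}{n}+\sigma n+e^{H(n)},\qquad H(n):=\frac{(V+\gamma\varepsilon)^2}{2}\Big(1-\frac1{n^2}\Big)-\sigma\ln n\quad(n>0). \] Then $g(1)>g(n_s)$.
   Context: $\zeta_\sigma$ denotes the unique root $z>1$ of $z^{\sigma}[\sigma(z-1)^2+1]=\exp(\tfrac{\sigma}{2}(z^2-1))$ on $(1,\infty)$. *)

From Stdlib Require Import Reals.
Open Scope R_scope.

Definition zeta_eq (sigma z : R) : Prop :=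
  Rpower z sigma * (sigma * (z - 1) ^ 2 + 1) = exp (sigma / 2 * (z ^ 2 - 1)).

Definition is_zeta (sigma zeta : R) : Prop :=
  1 < zeta /\ zeta_eq sigma zeta /\ (forall z, 1 < z -> zeta_eq sigma z -> z = zeta).

(* H(n) and g(n), with a = V + gamma*epsilon *)
Definition Hfun (sigma a n : R) : R :=
  a ^ 2 / 2 * (1 - 1 / n ^ 2) - sigma * ln n.

Definition gfun (sigma a n : R) : R :=
  a ^ 2 / n + sigma * n + exp (Hfun sigma a n).

(* With a = sqrt(sigma) n_s, one gets g(1) - g(n_s) = (sigma (n_s-1)^2 + 1)(1 - exp(-F(n_s)))
   where F(z) = sigma ln z + ln(sigma (z-1)^2 + 1) - sigma/2 (z^2 - 1) is the logarithm of the
   ratio of the two sides of the equation defining zeta_sigma. So it suffices that F(n_s) > 0.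
   Now F(zeta_sigma) = 0, and F' has the sign of 1 - sigma (z^2 - 1), which is negative beyond
   sqrt((1+sigma)/sigma); hence F decreases on [n_s, zeta_sigma] and F(n_s) > 0. *)
From Stdlib Require Import Reals Lra.
From Coquelicot Require Import Coquelicot.
Open Scope R_scope.

Definition zeta_log_gap (s z : R) : R :=
  s * ln z + ln (s * (z - 1) ^ 2 + 1) - s / 2 * (z ^ 2 - 1).

Definition zeta_log_gap' (s z : R) : R :=
  s * (z - 1) ^ 2 * (1 - s * (z ^ 2 - 1)) / (z * (s * (z - 1) ^ 2 + 1)).

Lemma shifted_square_pos (s z : R) : 0 <= s -> 0 < s * (z - 1) ^ 2 + 1.
Proof. intros Hs; pose proof (pow2_ge_0 (z - 1)); nra. Qed.

Lemma zeta_log_gap_root (s z : R) :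
  0 <= s -> zeta_eq s z -> zeta_log_gap s z = 0.
Proof.
  intros Hs Heq; unfold zeta_eq, Rpower in Heq; unfold zeta_log_gap.
  apply (f_equal ln) in Heq.
  rewrite ln_mult, !ln_exp in Heq;
    [lra | apply exp_pos | apply shifted_square_pos; exact Hs].
Qed.

Lemma zeta_log_gap_derive (s z : R) :
  0 < s -> 0 < z -> derivable_pt_lim (zeta_log_gap s) z (zeta_log_gap' s z).
Proof.
  intros Hs Hz; apply is_derive_Reals; unfold zeta_log_gap, zeta_log_gap'.
  pose proof (shifted_square_pos s z ltac:(lra)).
  auto_derive.
  - repeat split; try lra; ring_simplify; nra.
  - field; lra.
Qed.

Lemma zeta_log_gap'_neg (s z : R) :
  0 < s -> 1 < z -> 1 < s * (z ^ 2 - 1) -> zeta_log_gap' s z < 0.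
Proof.
  intros Hs Hz Hsz; unfold zeta_log_gap'.
  pose proof (shifted_square_pos s z ltac:(lra)).
  assert (0 < s * (z - 1) ^ 2) by (apply Rmult_lt_0_compat; [lra | apply pow_lt; lra]).
  apply Rdiv_neg_pos; nra.
Qed.

Lemma zeta_log_gap_decreasing (s x y : R) :
  0 < s -> 1 < x < y -> 1 < s * (x ^ 2 - 1) -> zeta_log_gap s y < zeta_log_gap s x.
Proof.
  intros Hs [Hx Hxy] Hsx.
  destruct (MVT_cor2 (zeta_log_gap s) (zeta_log_gap' s) x y Hxy) as [c [Hmvt Hc]].
  { intros c Hc; apply zeta_log_gap_derive; lra. }
  assert (Hneg : zeta_log_gap' s c < 0).
  { assert (x ^ 2 < c ^ 2) by nra.
    apply zeta_log_gap'_neg; [lra | lra | nra]. }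
  nra.
Qed.

Lemma Hfun_eq_log_gap (s a n : R) :
  0 < s -> 0 < n -> a ^ 2 = s * n ^ 2 ->
  Hfun s a n = ln (s * (n - 1) ^ 2 + 1) - zeta_log_gap s n.
Proof.
  intros Hs Hn Ha; unfold Hfun, zeta_log_gap; rewrite Ha; field; lra.
Qed.

Lemma gfun_1_sub_gfun_eq (s a n : R) :
  0 < s -> 0 < n -> a ^ 2 = s * n ^ 2 ->
  gfun s a 1 - gfun s a n = (s * (n - 1) ^ 2 + 1) * (1 - exp (- zeta_log_gap s n)).
Proof.
  intros Hs Hn Ha; pose proof (shifted_square_pos s n ltac:(lra)).
  assert (Hexp : exp (Hfun s a n) = (s * (n - 1) ^ 2 + 1) * exp (- zeta_log_gap s n)).
  { rewrite (Hfun_eq_log_gap s a n), <- exp_ln with (s * (n - 1) ^ 2 + 1), <- exp_plus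
      by lra.
    rewrite ln_exp; f_equal; ring. }
  assert (Hfun1 : Hfun s a 1 = 0) by (unfold Hfun; rewrite ln_1; field).
  unfold gfun; rewrite Hexp, Hfun1, exp_0, Ha; field; lra.
Qed.

Lemma threshold_of_sqrt_lt (s n : R) :
  0 < s -> sqrt ((1 + s) / s) < n -> 1 < s * (n ^ 2 - 1) /\ 1 < n.
Proof.
  intros Hs Hn.
  assert (Hq : 0 <= (1 + s) / s) by (apply Rlt_le, Rdiv_lt_0_compat; lra).
  pose proof (sqrt_pos ((1 + s) / s)).
  assert (Hsq : (1 + s) / s < n ^ 2) by (rewrite <- (sqrt_sqrt _ Hq); nra).
  assert (Hth : 1 < s * (n ^ 2 - 1)).
  { apply (Rmult_lt_compat_l s) in Hsq; [|lra].
    replace (s * ((1 + s) / s)) with (1 + s) in Hsq by (field; lra); lra. }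
  split; [exact Hth |].
  assert (1 < n ^ 2) by nra.
  nra.
Qed.

Lemma sq_div_sqrt (s a : R) : 0 < s -> a ^ 2 = s * (a / sqrt s) ^ 2.
Proof.
  intros Hs; pose proof (sqrt_lt_R0 s Hs).
  rewrite <- (pow2_sqrt s) at 1 by lra; field; lra.
Qed.

Theorem lemma2p1 (sigma V gamma eps zeta : R) :
  0 < sigma -> 0 < V -> 0 < gamma -> 0 < eps ->
  is_zeta sigma zeta ->
  sqrt ((1 + sigma) / sigma) < (V + gamma * eps) / sqrt sigma ->
  (V + gamma * eps) / sqrt sigma < zeta ->
  gfun sigma (V + gamma * eps) 1 >
    gfun sigma (V + gamma * eps) ((V + gamma * eps) / sqrt sigma).
Proof.
  intros Hs _ _ _ [Hz1 [Hzeq _]] Hlow Hup.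
  set (a := V + gamma * eps) in *; set (n := a / sqrt sigma) in *.
  destruct (threshold_of_sqrt_lt sigma n Hs Hlow) as [Hth Hn1].
  assert (Hgap : 0 < zeta_log_gap sigma n).
  { rewrite <- (zeta_log_gap_root sigma zeta ltac:(lra) Hzeq).
    apply zeta_log_gap_decreasing; lra. }
  assert (Hexp : exp (- zeta_log_gap sigma n) < 1).
  { rewrite <- exp_0; apply exp_increasing; lra. }
  apply Rminus_gt_0_lt.
  rewrite (gfun_1_sub_gfun_eq sigma a n Hs ltac:(lra) (sq_div_sqrt sigma a Hs)).
  apply Rmult_lt_0_compat; [apply shifted_square_pos | ]; lra.
Qed.
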